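(* Let $K$ be a field of characteristic $0$, let $L=\mathcal{L}(x,y)$ be the free Lie algebra over $K$ freely generated by $x,y$, let $\delta$ be the derivation of $L$ with $\delta(x)=0$, $\delta(y)=x$, and $L^\delta=\ker\delta$. Let $f\in L$ with $\deg_y(f)=2$. Then $f\in L^\delta$ if and only if $f$ belongs to the Lie subalgebra of $L$ generated by $x$ and $[y,x]$. *)

From mathcomp Require Import all_boot all_order all_algebra.
Set Implicit Arguments. Unset Strict Implicit. Unset Printing Implicit Defensive.
Import GRing.Theory.
Local Open Scope ring_scope.

(* Ambient algebra: noncommutative formal series K<<x,y>> over the alphabet
   {x,y}, encoded as functions from words to coefficients.
   Letter x is [false], letter y is [true]. *)
Definition ncs (K : fieldType) := seq bool -> K.

Section NC.
Variable K : fieldType.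

Definition nc_zero : ncs K := fun _ => 0.
Definition nc_add (f g : ncs K) : ncs K := fun w => f w + g w.
Definition nc_scale (a : K) (f : ncs K) : ncs K := fun w => a * f w.
Definition nc_mul (f g : ncs K) : ncs K :=
  fun w => \sum_(i < (size w).+1) f (take i w) * g (drop i w).
Definition nc_bracket (f g : ncs K) : ncs K :=
  fun w => nc_mul f g w - nc_mul g f w.

Definition nc_x : ncs K := fun w => if w == [:: false] then 1 else 0.
Definition nc_y : ncs K := fun w => if w == [:: true] then 1 else 0.

Inductive lie_gen (S : ncs K -> Prop) : ncs K -> Prop :=
| lie_gen_base f : S f -> lie_gen S f
| lie_gen_zero : lie_gen S nc_zero
| lie_gen_add f g : lie_gen S f -> lie_gen S g -> lie_gen S (nc_add f g)
| lie_gen_scale a f : lie_gen S f -> lie_gen S (nc_scale a f)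
| lie_gen_bracket f g : lie_gen S f -> lie_gen S g -> lie_gen S (nc_bracket f g).

(* The free Lie algebra L(x,y): the Lie subalgebra of K<x,y> generated by x,y
   (Lie polynomials). *)
Definition free_lie (f : ncs K) : Prop := lie_gen (fun g => g = nc_x \/ g = nc_y) f.

(* The derivation delta with delta(x)=0, delta(y)=x, i.e. on a word it is the
   sum over the words obtained by replacing one occurrence of y by x. *)
Definition nc_delta (f : ncs K) : ncs K :=
  fun w => \sum_(i < size w | nth true w i == false) f (set_nth false w i true).

Definition deg_y_eq (f : ncs K) (n : nat) : Prop :=
  (exists w, f w != 0 /\ count id w = n) /\
  (forall w, f w != 0 -> (count id w <= n)%N).

End NC.

From mathcomp Require Import all_boot all_order all_algebra.
From mathcomp Require Import ring zify.
From Stdlib Require Import FunctionalExtensionality.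
Set Implicit Arguments. Unset Strict Implicit. Unset Printing Implicit Defensive.
Import GRing.Theory.
Local Open Scope ring_scope.

(* The kernel of [delta] is a Lie subalgebra containing [x] and [[y,x]], which gives one
   direction.  Conversely, modulo words with at least three letters [y], every Lie polynomial
   is a combination of [x], of the [y_n = ad_x^n y] and of the brackets [[y_a, y_b]]: this span
   is closed under brackets by the Jacobi identity.  Such a combination splits into an element
   of the subalgebra generated by [x] and [y_1 = -[y,x]], plus a combination of [y] and of the
   [[y, y_(b+1)]].  On the latter [delta] is injective, since [delta y = x] and
   [delta [y, y_(b+1)] = y_(b+2)], whose coefficients at the words [x] and [x^(b+2) y] separate
   them. *)

Lemma take_set_nth_lt (T : Type) (x0 : T) (s : seq T) i k (b : T) :
  (i < k)%N -> (i < size s)%N ->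
  take k (set_nth x0 s i b) = set_nth x0 (take k s) i b.
Proof.
move=> hik his; apply: (@eq_from_nth _ x0).
  rewrite size_take !size_set_nth (maxn_idPr his) size_take.
  by case: ltnP => h; rewrite (maxn_idPr _) //; lia.
move=> j; rewrite size_take size_set_nth (maxn_idPr his) => hj.
have hjk : (j < k)%N by case: (ltnP k (size s)) hj => h hj; lia.
by rewrite nth_take // !nth_set_nth /=; case: eqP => // _; rewrite nth_take.
Qed.

Lemma drop_set_nth_lt (T : Type) (x0 : T) (s : seq T) i k (b : T) :
  (i < k)%N -> (i < size s)%N ->
  drop k (set_nth x0 s i b) = drop k s.
Proof.
move=> hik his; apply: (@eq_from_nth _ x0).
  by rewrite !size_drop size_set_nth (maxn_idPr his).
by move=> j _; rewrite !nth_drop nth_set_nth /=; case: eqP => // e; lia.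
Qed.

Lemma take_set_nth_ge (T : Type) (x0 : T) (s : seq T) i k (b : T) :
  (k <= i)%N -> (i < size s)%N ->
  take k (set_nth x0 s i b) = take k s.
Proof.
move=> hik his; apply: (@eq_from_nth _ x0).
  by rewrite !size_take size_set_nth (maxn_idPr his).
move=> j; rewrite size_take size_set_nth (maxn_idPr his) => hj.
have hjk : (j < k)%N by case: (ltnP k (size s)) hj => h hj; lia.
by rewrite !nth_take // nth_set_nth /=; case: eqP => // e; lia.
Qed.

Lemma drop_set_nth_ge (T : Type) (x0 : T) (s : seq T) i k (b : T) :
  (k <= i)%N -> (i < size s)%N ->
  drop k (set_nth x0 s i b) = set_nth x0 (drop k s) (i - k) b.
Proof.
move=> hik his; apply: (@eq_from_nth _ x0).
  by rewrite !size_drop !size_set_nth (maxn_idPr his) size_drop (maxn_idPr _) //; lia.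
move=> j _; rewrite !nth_drop !nth_set_nth /= nth_drop.
by have -> : ((k + j)%N == i) = (j == (i - k)%N) by apply/eqP/eqP; lia.
Qed.

Section NCSeries.
Variable K : fieldType.
Implicit Types (f g h : ncs K) (w : seq bool).

Local Notation X := (nc_x K).
Local Notation Y := (nc_y K).
Local Notation br := (@nc_bracket K).

Lemma ncs_ext f g : f =1 g -> f = g.
Proof. exact: functional_extensionality. Qed.

Lemma nc_add0l f : nc_add (nc_zero K) f = f.
Proof. by apply: ncs_ext => w; rewrite /nc_add add0r. Qed.

Lemma nc_add0r f : nc_add f (nc_zero K) = f.
Proof. by apply: ncs_ext => w; rewrite /nc_add addr0. Qed.

Lemma nc_scaler0 a : nc_scale a (nc_zero K) = nc_zero K.
Proof. by apply: ncs_ext => w; rewrite /nc_scale mulr0. Qed.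

Lemma nc_mulE f g w :
  nc_mul f g w = \sum_(0 <= i < (size w).+1) f (take i w) * g (drop i w).
Proof. by rewrite big_mkord. Qed.

Lemma nc_mulDl f g h : nc_mul (nc_add f g) h = nc_add (nc_mul f h) (nc_mul g h).
Proof.
apply: ncs_ext => w; rewrite /nc_add -big_split.
by apply: eq_bigr => i _; rewrite mulrDl.
Qed.

Lemma nc_mulDr f g h : nc_mul h (nc_add f g) = nc_add (nc_mul h f) (nc_mul h g).
Proof.
apply: ncs_ext => w; rewrite /nc_add -big_split.
by apply: eq_bigr => i _; rewrite mulrDr.
Qed.

Lemma nc_mulZl a f h : nc_mul (nc_scale a f) h = nc_scale a (nc_mul f h).
Proof.
apply: ncs_ext => w; rewrite /nc_scale mulr_sumr.
by apply: eq_bigr => i _; rewrite mulrA.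
Qed.

Lemma nc_mulZr a f h : nc_mul h (nc_scale a f) = nc_scale a (nc_mul h f).
Proof.
apply: ncs_ext => w; rewrite /nc_scale mulr_sumr.
by apply: eq_bigr => i _; rewrite mulrCA.
Qed.

Lemma nc_mul0l h : nc_mul (nc_zero K) h = nc_zero K.
Proof. by apply: ncs_ext => w; rewrite /nc_mul big1 // => i _; rewrite mul0r. Qed.

Lemma nc_mul0r h : nc_mul h (nc_zero K) = nc_zero K.
Proof. by apply: ncs_ext => w; rewrite /nc_mul big1 // => i _; rewrite mulr0. Qed.

Lemma nc_mulBl f g h w :
  nc_mul (fun u => f u - g u) h w = nc_mul f h w - nc_mul g h w.
Proof. by rewrite -sumrB; apply: eq_bigr => i _; rewrite mulrBl. Qed.

Lemma nc_mulBr f g h w :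
  nc_mul h (fun u => f u - g u) w = nc_mul h f w - nc_mul h g w.
Proof. by rewrite -sumrB; apply: eq_bigr => i _; rewrite mulrBr. Qed.

Lemma nc_mulA f g h : nc_mul (nc_mul f g) h = nc_mul f (nc_mul g h).
Proof.
apply: ncs_ext => w; set n := size w.
pose F i j := f (take i w) * g (drop i (take j w)) * h (drop j w).
transitivity (\sum_(0 <= j < n.+1) \sum_(0 <= i < n.+1) if (i <= j)%N then F i j else 0).
  rewrite nc_mulE; apply: eq_big_nat => j /andP[_ Hj].
  rewrite nc_mulE size_takel; last by rewrite -ltnS.
  rewrite mulr_suml (big_nat_widen _ _ _ _ _ Hj) big_mkcond.
  apply: eq_big_nat => i _; rewrite ltnS /= /F.
  by case: ifP => // Hij; rewrite take_takel.
rewrite exchange_big_nat nc_mulE; apply: eq_big_nat => i /andP[_ Hi].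
rewrite nc_mulE size_drop mulr_sumr.
rewrite (@big_cat_nat _ _ _ i 0 n.+1) //; last exact: ltnW.
rewrite big_nat_cond big1 ?add0r; last first.
  by move=> j /andP[/andP[_ Hj] _]; rewrite leqNgt Hj.
rewrite -{1}(add0n i) big_addn subSn; last by rewrite -ltnS.
rewrite Monoid.mul1m; apply: eq_big_nat => k _.
by rewrite leq_addl /F mulrA take_drop drop_drop.
Qed.

Lemma nc_bracketDl f g h : br (nc_add f g) h = nc_add (br f h) (br g h).
Proof. by apply: ncs_ext => w; rewrite /nc_bracket nc_mulDl nc_mulDr /nc_add; ring. Qed.

Lemma nc_bracketDr f g h : br h (nc_add f g) = nc_add (br h f) (br h g).
Proof. by apply: ncs_ext => w; rewrite /nc_bracket nc_mulDl nc_mulDr /nc_add; ring. Qed.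

Lemma nc_bracketZl a f h : br (nc_scale a f) h = nc_scale a (br f h).
Proof. by apply: ncs_ext => w; rewrite /nc_bracket nc_mulZl nc_mulZr /nc_scale; ring. Qed.

Lemma nc_bracketZr a f h : br h (nc_scale a f) = nc_scale a (br h f).
Proof. by apply: ncs_ext => w; rewrite /nc_bracket nc_mulZl nc_mulZr /nc_scale; ring. Qed.

Lemma nc_bracket0l h : br (nc_zero K) h = nc_zero K.
Proof. by apply: ncs_ext => w; rewrite /nc_bracket nc_mul0l nc_mul0r subrr. Qed.

Lemma nc_bracket0r h : br h (nc_zero K) = nc_zero K.
Proof. by apply: ncs_ext => w; rewrite /nc_bracket nc_mul0l nc_mul0r subrr. Qed.

Lemma nc_bracketC f g : br g f = nc_scale (-1) (br f g).
Proof. by apply: ncs_ext => w; rewrite /nc_scale /nc_bracket mulN1r opprB. Qed.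

Lemma nc_bracketxx f : br f f = nc_zero K.
Proof. by apply: ncs_ext => w; rewrite /nc_bracket subrr. Qed.

Lemma nc_jacobi f g h : br f (br g h) = nc_add (br (br f g) h) (br g (br f h)).
Proof. by apply: ncs_ext => w; rewrite /nc_add /nc_bracket !nc_mulBl !nc_mulBr !nc_mulA; ring. Qed.

Definition is_x w i : K := (~~ nth true w i)%:R.

Lemma nc_deltaE f w :
  nc_delta f w = \sum_(0 <= i < size w) is_x w i * f (set_nth false w i true).
Proof.
rewrite /nc_delta big_mkcond big_mkord; apply: eq_bigr => i _ /=.
by rewrite /is_x; case: (nth true w i); rewrite ?mul0r ?mul1r.
Qed.

Lemma nc_deltaD f g : nc_delta (nc_add f g) = nc_add (nc_delta f) (nc_delta g).
Proof.
apply: ncs_ext => w; rewrite /nc_add !nc_deltaE -big_split.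
by apply: eq_bigr => i _; rewrite mulrDr.
Qed.

Lemma nc_deltaZ a f : nc_delta (nc_scale a f) = nc_scale a (nc_delta f).
Proof.
apply: ncs_ext => w; rewrite /nc_scale !nc_deltaE mulr_sumr.
by apply: eq_bigr => i _; rewrite mulrCA.
Qed.

Lemma nc_delta0 : nc_delta (nc_zero K) = nc_zero K.
Proof. by apply: ncs_ext => w; rewrite nc_deltaE big1 // => i _; rewrite mulr0. Qed.

Lemma nc_deltaB f g w :
  nc_delta (fun u => f u - g u) w = nc_delta f w - nc_delta g w.
Proof. by rewrite !nc_deltaE -sumrB; apply: eq_bigr => i _; rewrite mulrBr. Qed.

Lemma nc_delta_mul f g :
  nc_delta (nc_mul f g) = nc_add (nc_mul (nc_delta f) g) (nc_mul f (nc_delta g)).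
Proof.
apply: ncs_ext => w.
rewrite /nc_add nc_deltaE !nc_mulE -big_split /=.
transitivity (\sum_(0 <= i < size w) \sum_(0 <= k < (size w).+1) is_x w i *
   (f (take k (set_nth false w i true)) * g (drop k (set_nth false w i true)))).
  apply: eq_big_nat => i /andP[_ hi].
  by rewrite nc_mulE size_set_nth (maxn_idPr hi) mulr_sumr.
rewrite exchange_big_nat /=; apply: eq_big_nat => k /andP[_ hk].
rewrite ltnS in hk; rewrite (@big_cat_nat _ _ _ k 0 (size w)) //=; congr (_ + _).
  rewrite nc_deltaE mulr_suml size_takel //.
  apply: eq_big_nat => i /andP[_ hi].
  rewrite take_set_nth_lt ?drop_set_nth_lt //; try lia.
  by rewrite /is_x nth_take // mulrA.
rewrite nc_deltaE mulr_sumr size_drop -{1}(add0n k) big_addn.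
apply: eq_big_nat => j /andP[_ hj].
rewrite take_set_nth_ge ?drop_set_nth_ge; try lia.
by rewrite /is_x nth_drop addnK addnC mulrCA.
Qed.

Lemma nc_delta_bracket f g :
  nc_delta (br f g) = nc_add (br (nc_delta f) g) (br f (nc_delta g)).
Proof.
apply: ncs_ext => w.
by rewrite /nc_add /nc_bracket nc_deltaB !nc_delta_mul /nc_add; ring.
Qed.

Lemma nc_delta_x : nc_delta X = nc_zero K.
Proof.
apply: ncs_ext => w; rewrite nc_deltaE big_mkord big1 // => -[i hi] _ /=.
rewrite /nc_x; case: eqP => [E|]; last by rewrite mulr0.
have : true \in set_nth false w i true.
  apply/(nthP false); exists i; first by rewrite size_set_nth leq_max ltnSn.
  by rewrite nth_set_nth /= eqxx.
by rewrite E.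
Qed.

Lemma nc_delta_y : nc_delta Y = X.
Proof.
apply: ncs_ext => w; rewrite nc_deltaE; case: w => [|b [|c w]].
- by rewrite big_geq.
- by rewrite big_nat1 /is_x /nc_y /nc_x; case: b; rewrite /= ?mulr1 ?mul0r.
rewrite big_mkord big1; first by rewrite /nc_x; case: ifP => // /eqP.
move=> -[i hi] _ /=; rewrite /nc_y; case: eqP; last by rewrite mulr0.
by move=> /(congr1 size); rewrite size_set_nth /=; lia.
Qed.

Lemma nc_delta_lie_gen S f : (forall g, S g -> nc_delta g = nc_zero K) ->
  lie_gen S f -> nc_delta f = nc_zero K.
Proof.
move=> dS; elim=> {f} [g /dS //| |f g _ df _ dg|a f _ df|f g _ df _ dg].
- exact: nc_delta0.
- by rewrite nc_deltaD df dg nc_add0r.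
- by rewrite nc_deltaZ df nc_scaler0.
- by rewrite nc_delta_bracket df dg nc_bracket0l nc_bracket0r nc_add0r.
Qed.

Definition ad_x_y n : ncs K := iter n (br X) Y.

Definition xu_gens g : Prop := g = X \/ g = br Y X.

Lemma nc_delta_xu_gens g : xu_gens g -> nc_delta g = nc_zero K.
Proof.
case=> ->; first exact: nc_delta_x.
by rewrite nc_delta_bracket nc_delta_y nc_delta_x nc_bracketxx nc_bracket0r nc_add0r.
Qed.

Lemma lie_gen_xu_ad_x_y n : lie_gen xu_gens (ad_x_y n.+1).
Proof.
elim: n => [|n IH]; last exact: lie_gen_bracket (lie_gen_base (or_introl erefl)) IH.
by rewrite /= nc_bracketC; apply/lie_gen_scale/lie_gen_base; right.
Qed.

Definition homog (p : pred bool) d f := forall w, count p w != d -> f w = 0.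

Lemma homog_mul p d e f g : homog p d f -> homog p e g -> homog p (d + e)%N (nc_mul f g).
Proof.
move=> hf hg w hw; rewrite /nc_mul big1 // => i _.
have split_w : (count p (take i w) + count p (drop i w))%N = count p w.
  by rewrite -count_cat cat_take_drop.
have [ed|/hf->] := eqVneq (count p (take i w)) d; last by rewrite mul0r.
have [ee|/hg->] := eqVneq (count p (drop i w)) e; last by rewrite mulr0.
by move: hw; rewrite -split_w ed ee eqxx.
Qed.

Lemma homog_bracket p d e f g : homog p d f -> homog p e g -> homog p (d + e)%N (br f g).
Proof.
move=> hf hg w hw; rewrite /nc_bracket (homog_mul hf hg hw).
by rewrite addnC in hw; rewrite (homog_mul hg hf hw) subrr.
Qed.

Lemma homog_x p : homog p (p false) X.
Proof. by move=> w; rewrite /nc_x; case: (w =P [:: false]) => // ->; rewrite /= addn0 eqxx. Qed.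

Lemma homog_y p : homog p (p true) Y.
Proof. by move=> w; rewrite /nc_y; case: (w =P [:: true]) => // ->; rewrite /= addn0 eqxx. Qed.

Lemma homog_ad_x_y p n : homog p (n * p false + p true)%N (ad_x_y n).
Proof.
elim: n => [|n IH]; first exact: homog_y.
by rewrite mulSn -addnA; exact: homog_bracket (@homog_x p) IH.
Qed.

Lemma ydeg_ad_x_y n : homog id 1 (ad_x_y n).
Proof. by have := @homog_ad_x_y id n; rewrite muln0. Qed.

Lemma ydeg_bracket_ad_x_y a b : homog id 2 (br (ad_x_y a) (ad_x_y b)).
Proof. exact: homog_bracket (ydeg_ad_x_y a) (ydeg_ad_x_y b). Qed.

Definition ydeg_le n f := forall w, (n < count id w)%N -> f w = 0.

Lemma homog_ydeg_le n d f : homog id d f -> (d <= n)%N -> ydeg_le n f.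
Proof. by move=> hf dn w hw; apply: hf; apply/eqP; lia. Qed.

Definition eq_upto n f g := forall w, (count id w <= n)%N -> f w = g w.

Lemma eq_upto_mul n f f' g g' :
  eq_upto n f f' -> eq_upto n g g' -> eq_upto n (nc_mul f g) (nc_mul f' g').
Proof.
move=> ef eg w hw; apply: eq_bigr => i _.
have split_w : (count id (take i w) + count id (drop i w))%N = count id w.
  by rewrite -count_cat cat_take_drop.
by rewrite ef ?eg //; lia.
Qed.

Lemma eq_upto_bracket n f f' g g' :
  eq_upto n f f' -> eq_upto n g g' -> eq_upto n (br f g) (br f' g').
Proof.
by move=> ef eg w hw; rewrite /nc_bracket (eq_upto_mul ef eg hw) (eq_upto_mul eg ef hw).
Qed.

Lemma eq_upto_homog0 n d g : (n < d)%N -> homog id d g -> eq_upto n g (nc_zero K).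
Proof. by move=> nd hg w hw; apply: hg; apply/eqP; lia. Qed.

Lemma eq_upto_ydeg_le n f g : eq_upto n f g -> ydeg_le n f -> ydeg_le n g -> f = g.
Proof.
move=> efg df dg; apply: ncs_ext => w.
by case: (leqP (count id w) n) => hw; [apply: efg | rewrite df ?dg].
Qed.

Inductive span (S : ncs K -> Prop) : ncs K -> Prop :=
| span_base f : S f -> span S f
| span_zero : span S (nc_zero K)
| span_add f g : span S f -> span S g -> span S (nc_add f g)
| span_scale a f : span S f -> span S (nc_scale a f).

Definition linear_closed (P : ncs K -> Prop) := [/\ P (nc_zero K),
  forall f g, P f -> P g -> P (nc_add f g) & forall a f, P f -> P (nc_scale a f)].

Lemma span_sub S P : linear_closed P -> (forall f, S f -> P f) ->
  forall f, span S f -> P f.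
Proof. by case=> P0 PD PZ PS f; elim; auto. Qed.

Lemma span_sub2 S (R : ncs K -> ncs K -> Prop) :
  (forall f, linear_closed (R f)) -> (forall g, linear_closed (R^~ g)) ->
  (forall f g, S f -> S g -> R f g) ->
  forall f g, span S f -> span S g -> R f g.
Proof.
move=> Rr Rl RS f g sf; move: f sf g; apply: span_sub.
  split=> [g _|f1 f2 R1 R2 g sg|a f Rf g sg].
  - by case: (Rl g).
  - by case: (Rl g) => _ + _; apply; [apply: R1 | apply: R2].
  - by case: (Rl g) => _ _; apply; apply: Rf.
by move=> f Sf; apply: span_sub (Rr f) _ => g; apply: RS.
Qed.

Definition low_gens g : Prop := [\/ g = X, exists n, g = ad_x_y n
  | exists a b, g = br (ad_x_y a) (ad_x_y b)].

Lemma span_low_gens_ydeg_le C : span low_gens C -> ydeg_le 2 C.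
Proof.
apply: span_sub.
  split=> [w _ //|f g df dg w hw|a f df w hw]; rewrite /nc_add /nc_scale.
  - by rewrite df ?dg ?addr0.
  - by rewrite df ?mulr0.
move=> f [->|[n ->]|[a [b ->]]].
- exact: homog_ydeg_le (@homog_x id) _.
- exact: homog_ydeg_le (ydeg_ad_x_y n) _.
- exact: homog_ydeg_le (ydeg_bracket_ad_x_y a b) _.
Qed.

Definition bracket_spanned A B := exists2 C, span low_gens C & eq_upto 2 (br A B) C.

Lemma bracket_spanned_linear_r A : linear_closed (bracket_spanned A).
Proof.
split=> [|B1 B2 [C1 s1 e1] [C2 s2 e2]|a B [C s e]].
- by exists (nc_zero K); [exact: span_zero | rewrite nc_bracket0r].
- exists (nc_add C1 C2); first exact: span_add.
  by rewrite nc_bracketDr => w hw; rewrite /nc_add e1 ?e2.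
- exists (nc_scale a C); first exact: span_scale.
  by rewrite nc_bracketZr => w hw; rewrite /nc_scale e.
Qed.

Lemma bracket_spanned_linear_l B : linear_closed (bracket_spanned^~ B).
Proof.
split=> [|A1 A2 [C1 s1 e1] [C2 s2 e2]|a A [C s e]].
- by exists (nc_zero K); [exact: span_zero | rewrite nc_bracket0l].
- exists (nc_add C1 C2); first exact: span_add.
  by rewrite nc_bracketDl => w hw; rewrite /nc_add e1 ?e2.
- exists (nc_scale a C); first exact: span_scale.
  by rewrite nc_bracketZl => w hw; rewrite /nc_scale e.
Qed.

Lemma bracket_spannedC A B : bracket_spanned B A -> bracket_spanned A B.
Proof.
case=> C sC e; exists (nc_scale (-1) C); first exact: span_scale.
by rewrite nc_bracketC => w hw; rewrite /nc_scale e.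
Qed.

Lemma bracket_spanned_homog A B a b :
  homog id a A -> homog id b B -> (2 < a + b)%N -> bracket_spanned A B.
Proof.
move=> hA hB ab; exists (nc_zero K); first exact: span_zero.
exact: eq_upto_homog0 ab (homog_bracket hA hB).
Qed.

Lemma bracket_spanned_x B : low_gens B -> bracket_spanned X B.
Proof.
case=> [->|[n ->]|[a [b ->]]].
- by exists (nc_zero K); [exact: span_zero | rewrite nc_bracketxx].
- by exists (ad_x_y n.+1) => //; apply/span_base/Or32; exists n.+1.
exists (nc_add (br (ad_x_y a.+1) (ad_x_y b)) (br (ad_x_y a) (ad_x_y b.+1))).
  by apply: span_add; apply/span_base/Or33; [exists a.+1, b | exists a, b.+1].
by rewrite nc_jacobi.
Qed.

Lemma bracket_spanned_low_gens A B : low_gens A -> low_gens B -> bracket_spanned A B.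
Proof.
move=> gA gB; case: (gA) => [->|[n ->]|[a [b ->]]]; first exact: bracket_spanned_x.
- case: gB => [->|[m ->]|[c [d ->]]].
  + by apply/bracket_spannedC/bracket_spanned_x/Or32; exists n.
  + by exists (br (ad_x_y n) (ad_x_y m)) => //; apply/span_base/Or33; exists n, m.
  + exact: bracket_spanned_homog (ydeg_ad_x_y n) (ydeg_bracket_ad_x_y c d) _.
case: gB => [->|[m ->]|[c [d ->]]].
- by apply/bracket_spannedC/bracket_spanned_x/Or33; exists a, b.
- exact: bracket_spanned_homog (ydeg_bracket_ad_x_y a b) (ydeg_ad_x_y m) _.
- exact: bracket_spanned_homog (ydeg_bracket_ad_x_y a b) (ydeg_bracket_ad_x_y c d) _.
Qed.

Lemma free_lie_eq_upto2 f : free_lie f -> exists2 C, span low_gens C & eq_upto 2 f C.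
Proof.
elim=> {f} [g [->|->]| |f g _ [C1 s1 e1] _ [C2 s2 e2]|a f _ [C s e]
            |f g _ [C1 s1 e1] _ [C2 s2 e2]].
- by exists X => //; apply/span_base/Or31.
- by exists (ad_x_y 0) => //; apply/span_base/Or32; exists 0%N.
- by exists (nc_zero K) => //; exact: span_zero.
- by exists (nc_add C1 C2) => [|w hw]; [exact: span_add | rewrite /nc_add e1 ?e2].
- by exists (nc_scale a C) => [|w hw]; [exact: span_scale | rewrite /nc_scale e].
have [C sC e] := span_sub2 bracket_spanned_linear_r bracket_spanned_linear_l
  bracket_spanned_low_gens s1 s2.
by exists C => // w hw; rewrite (eq_upto_bracket e1 e2 hw) e.
Qed.

Definition y_bracket b : ncs K := br Y (ad_x_y b.+1).

Definition y_bracket_gens t : Prop := t = Y \/ exists b, t = y_bracket b.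

Lemma span_low_gens_split C : span low_gens C -> exists C' t,
  [/\ lie_gen xu_gens C', span y_bracket_gens t & C = nc_add C' t].
Proof.
pose P C := exists C' t, [/\ lie_gen xu_gens C', span y_bracket_gens t & C = nc_add C' t].
have in_lie C' : lie_gen xu_gens C' -> P C'.
  by move=> VC'; exists C', (nc_zero K); rewrite nc_add0r; split=> //; exact: span_zero.
have in_span t : span y_bracket_gens t -> P t.
  by move=> st; exists (nc_zero K), t; rewrite nc_add0l; split=> //; exact: lie_gen_zero.
apply: (@span_sub _ P).
  split=> [|f g [f' [t [Vf st ->]]] [g' [u [Vg su ->]]]|a f [f' [t [Vf st ->]]]].
  - exact/in_lie/lie_gen_zero.
  - exists (nc_add f' g'), (nc_add t u); split; [exact: lie_gen_add | exact: span_add |].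
    by apply: ncs_ext => w; rewrite /nc_add addrACA.
  - exists (nc_scale a f'), (nc_scale a t); split; [exact: lie_gen_scale | exact: span_scale |].
    by apply: ncs_ext => w; rewrite /nc_add /nc_scale mulrDr.
move=> f [->|[[|n] ->]|[[|a] [[|b] ->]]].
- exact/in_lie/lie_gen_base/or_introl.
- exact/in_span/span_base/or_introl.
- exact/in_lie/lie_gen_xu_ad_x_y.
- by rewrite nc_bracketxx; apply/in_lie/lie_gen_zero.
- by apply/in_span/span_base; right; exists b.
- by rewrite nc_bracketC; apply/in_span/span_scale/span_base; right; exists a.
- by apply/in_lie/lie_gen_bracket; apply: lie_gen_xu_ad_x_y.
Qed.

Definition x_pow_y n : seq bool := rcons (nseq n false) true.

Lemma nc_mul_x_cons g b s : nc_mul X g (b :: s) = if b then 0 else g s.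
Proof.
have x_size w : size w != 1%N -> X w = 0 by rewrite /nc_x; case: (w =P [:: false]) => // ->.
rewrite /nc_mul big_ord_recl /= x_size // mul0r add0r big_ord_recl /= big1 ?addr0.
  by rewrite /nc_x; case: b; rewrite /= ?mul0r // take0 drop0 mul1r.
move=> [i hi] _ /=; rewrite x_size ?mul0r //= /bump /= size_take.
by case: ltnP => _; lia.
Qed.

Lemma nc_mul_rcons_y_x g s : nc_mul g X (rcons s true) = 0.
Proof.
rewrite /nc_mul big1 // => i _; rewrite /nc_x; case: eqP => [E|]; last by rewrite mulr0.
have := cat_take_drop i (rcons s true); rewrite E => /(congr1 (last false)).
by rewrite last_rcons last_cat.
Qed.

Lemma ad_x_y_x_pow_y n k : ad_x_y n (x_pow_y k) = (n == k)%:R.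
Proof.
elim: n k => [|n IH] [|k] /=.
- by rewrite /nc_y.
- by rewrite /nc_y; case: eqP => // /(congr1 size); rewrite size_rcons.
- by rewrite /nc_bracket nc_mul_x_cons (nc_mul_rcons_y_x _ [::]) subr0.
- by rewrite /nc_bracket nc_mul_x_cons nc_mul_rcons_y_x subr0 IH eqSS.
Qed.

Lemma nc_delta_y_bracket b : nc_delta (y_bracket b) = ad_x_y b.+2.
Proof.
rewrite /y_bracket nc_delta_bracket nc_delta_y.
by rewrite (nc_delta_lie_gen nc_delta_xu_gens (lie_gen_xu_ad_x_y b)) nc_bracket0r nc_add0r.
Qed.

(* The sum may stop at [size w] because [y_bracket b] is homogeneous of length [b + 3]. *)
Lemma span_y_bracket_gens_coef t : span y_bracket_gens t -> forall w,
  t w = nc_delta t [:: false] * Y w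
        + \sum_(0 <= b < size w) nc_delta t (x_pow_y b.+2) * y_bracket b w.
Proof.
elim=> {t} [f [->|[c ->]]| |f g _ ef _ eg|a f _ ef] w.
- rewrite nc_delta_y {1}/nc_x eqxx mul1r big1 ?addr0 // => b _.
  by rewrite (@homog_x predT) ?mul0r // count_predT size_rcons size_nseq.
- rewrite nc_delta_y_bracket (@homog_ad_x_y predT) ?mul0r ?add0r //.
  under eq_bigr do rewrite ad_x_y_x_pow_y eqSS mulr_natl mulrb eq_sym.
  rewrite -big_mkcond big_nat1_eq /=; case: ltnP => // hw.
  apply: (homog_bracket (@homog_y predT) (@homog_ad_x_y predT c.+1)).
  by rewrite count_predT /= muln1; lia.
- by rewrite nc_delta0 /nc_zero mul0r add0r big1 // => b _; rewrite mul0r.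
- rewrite nc_deltaD /nc_add ef eg.
  under [in RHS]eq_bigr do rewrite mulrDl.
  by rewrite big_split /=; ring.
- rewrite nc_deltaZ /nc_scale ef mulrDr mulr_sumr.
  under [in RHS]eq_bigr do rewrite -mulrA.
  by rewrite -mulrA.
Qed.

Lemma span_y_bracket_gens_delta_inj t :
  span y_bracket_gens t -> nc_delta t = nc_zero K -> t = nc_zero K.
Proof.
move=> st dt; apply: ncs_ext => w; rewrite (span_y_bracket_gens_coef st) dt /nc_zero.
by rewrite mul0r add0r big1 // => b _; rewrite mul0r.
Qed.

Lemma lie_gen_xu_of_delta0 f : free_lie f -> ydeg_le 2 f ->
  nc_delta f = nc_zero K -> lie_gen xu_gens f.
Proof.
move=> Lf df deltaf.
have [C sC fC] := free_lie_eq_upto2 Lf.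
have {fC df} f_eq := eq_upto_ydeg_le fC df (span_low_gens_ydeg_le sC).
have [C' [t [VC' st C_eq]]] := span_low_gens_split sC.
have t0 : t = nc_zero K.
  apply: (span_y_bracket_gens_delta_inj st).
  by rewrite -deltaf f_eq C_eq nc_deltaD (nc_delta_lie_gen nc_delta_xu_gens VC') nc_add0l.
by rewrite f_eq C_eq t0 nc_add0r.
Qed.

End NCSeries.

Theorem corollary5p2 (K : fieldType) (hK : [pchar K] =i pred0)
  (f : ncs K) (hL : free_lie f) (hdeg : deg_y_eq f 2) :
  (forall w, nc_delta f w = 0) <->
  lie_gen (fun g => g = nc_x K \/ g = nc_bracket (nc_y K) (nc_x K)) f.
Proof.
split=> [deltaf|Vf w]; last by rewrite (nc_delta_lie_gen (@nc_delta_xu_gens K) Vf).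
apply: lie_gen_xu_of_delta0 hL _ (ncs_ext deltaf).
by case: hdeg => _ hle w hw; apply: contraTeq hw => /hle; rewrite -leqNgt.
Qed.
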